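(* The $K_3$-WORM feasible sets of $K_3$-WORM-colorable graphs may contain arbitrarily large gaps: for every positive integer $m$ there exist a $K_3$-WORM-colorable graph $G$ and an integer $a$ such that $W^-(G,K_3)<a$, $a+m-1<W^+(G,K_3)$, and none of $a,a+1,\dots,a+m-1$ belongs to $\Phi_W(G,K_3)$.
   Context: A $K_3$-WORM coloring of a graph $G$ is an assignment of colors to the vertices of $G$ such that the three vertices of every triangle of $G$ receive exactly two distinct colors. $G$ is $K_3$-WORM-colorable if it has such a coloring; then $W^-(G,K_3)$ and $W^+(G,K_3)$ are the minimum and maximum number of colors used in a $K_3$-WORM coloring of $G$, and the feasible set $\Phi_W(G,K_3)$ is the set of integers $s$ such that $G$ has a $K_3$-WORM coloring using exactly $s$ colors. $G$ has a gap at $k$ if $W^-(G,K_3)<k<W^+(G,K_3)$ and $k\notin\Phi_W(G,K_3)$. *)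

From mathcomp Require Import all_boot.
Set Implicit Arguments. Unset Strict Implicit. Unset Printing Implicit Defensive.

Definition simple_graph (T : finType) (e : rel T) : Prop :=
  symmetric e /\ irreflexive e.

Definition triangle (T : finType) (e : rel T) (x y z : T) : Prop :=
  [/\ e x y, e y z & e x z].

Definition num_colors (T : finType) (c : T -> nat) : nat :=
  size (undup [seq c x | x <- enum T]).

Definition K3_worm (T : finType) (e : rel T) (c : T -> nat) : Prop :=
  forall x y z, triangle e x y z ->
    size (undup [:: c x; c y; c z]) = 2.

Definition K3_worm_colorable (T : finType) (e : rel T) : Prop :=
  exists c, K3_worm e c.

Definition feasible (T : finType) (e : rel T) (s : nat) : Prop :=
  exists c, K3_worm e c /\ num_colors c = s.

Definition is_Wminus (T : finType) (e : rel T) (k : nat) : Prop :=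
  feasible e k /\ forall s, feasible e s -> k <= s.
Definition is_Wplus (T : finType) (e : rel T) (k : nat) : Prop :=
  feasible e k /\ forall s, feasible e s -> s <= k.

From HB Require Import structures.
From mathcomp Require Import all_boot zify.
From Stdlib Require Import Classical.
Set Implicit Arguments. Unset Strict Implicit. Unset Printing Implicit Defensive.

(* The graph is built around an edge U V.  A vertex adjacent to the three
   vertices of a triangle must take one of their colors, and two such vertices
   must take the same color.  If a K_3-WORM coloring gives U and V the same
   color, the K+1 hubs H i, all adjacent to U and V, avoid that color, and a
   gadget for each pair i <> j forces H i and H j apart: at least K+2 colors.
   If U and V get different colors, every vertex is forced into the palette
   formed by these two colors and the colors of the triangles Q and R: at most
   8 colors.  Both cases occur (with 3 and with K+2 colors), so for K = m+7 no
   coloring uses between 9 and m+8 colors. *)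

Definition two_colored (x y z : nat) : Prop :=
  x = y /\ y <> z \/ x = z /\ x <> y \/ y = z /\ x <> y.

Lemma two_coloredP x y z : size (undup [:: x; y; z]) = 2 <-> two_colored x y z.
Proof.
by rewrite /two_colored /= !inE; case: (x =P y); case: (x =P z); case: (y =P z) => /=; lia.
Qed.

Lemma two_colored_pair x y z : x <> y -> two_colored x y z -> z = x \/ z = y.
Proof. rewrite /two_colored; lia. Qed.

Lemma apex_color_mem x y w z :
  two_colored x y w -> two_colored x y z -> two_colored x w z -> z \in [:: x; y; w].
Proof.
by rewrite /two_colored !inE; case: (z =P x); case: (z =P y); case: (z =P w) => /=; lia.
Qed.

Lemma apex_color_eq x y w z z' :
  two_colored x y w ->
  two_colored z x y -> two_colored z x w -> two_colored z y w ->
  two_colored z' x y -> two_colored z' x w -> two_colored z' y w -> z = z'.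
Proof. by rewrite /two_colored; case=> [[-> ?]|[[-> ?]|[-> ?]]]; lia. Qed.

Section NumColors.
Variables (T : finType) (c : T -> nat).

Lemma num_colorsE : num_colors c = size (undup (codom c)).
Proof. by []. Qed.

Lemma num_colors_le (s : seq nat) : (forall x, c x \in s) -> num_colors c <= size s.
Proof.
move=> cs; rewrite num_colorsE uniq_leq_size ?undup_uniq // => y.
by rewrite mem_undup => /codomP [x ->].
Qed.

Lemma num_colors_ge (s : seq nat) :
  uniq s -> {subset s <= codom c} -> size s <= num_colors c.
Proof. by move=> s_uniq sc; rewrite num_colorsE uniq_leq_size // => y /sc; rewrite mem_undup. Qed.

Lemma num_colors_le_card : num_colors c <= #|T|.
Proof. by rewrite num_colorsE (leq_trans (size_undup _)) // size_map cardE. Qed.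

End NumColors.

Lemma num_colors_comp (T1 T2 : finType) (f : T1 -> T2) (c : T2 -> nat) :
  bijective f -> num_colors (c \o f) = num_colors c.
Proof.
case=> g fK gK; rewrite !num_colorsE; apply/perm_size/uniq_perm; rewrite ?undup_uniq // => y.
rewrite !mem_undup; apply/codomP/codomP => -[x ->]; first by exists (f x).
by exists (g x); rewrite /= gK.
Qed.

Section Relabel.
Variables (T1 T2 : finType) (f : T1 -> T2) (e : rel T2).

Lemma simple_graph_relpre : simple_graph e -> simple_graph (relpre f e).
Proof. by case=> e_sym e_irr; split=> [x y|x] /=; rewrite ?e_irr // e_sym. Qed.

Lemma K3_worm_relpre c : K3_worm e c -> K3_worm (relpre f e) (c \o f).
Proof. by move=> c_worm x y z; apply: c_worm. Qed.

Lemma feasible_relpre s : bijective f -> feasible (relpre f e) s <-> feasible e s.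
Proof.
move=> f_bij; have [g fK gK] := f_bij; split=> -[c [c_worm <-]].
  exists (c \o g); split; last by rewrite num_colors_comp //; apply: bij_can_bij fK.
  by move=> x y z [xy yz xz]; apply: c_worm; split; rewrite /= !gK.
by exists (c \o f); rewrite num_colors_comp //; split; first exact: K3_worm_relpre.
Qed.

End Relabel.

Lemma ex_least (P : nat -> Prop) :
  (exists n, P n) -> exists n, P n /\ forall s, P s -> n <= s.
Proof.
case=> n Pn; apply: NNPP => no_least; elim/ltn_ind: n Pn => n IH Pn.
by apply: no_least; exists n; split=> // s Ps; rewrite leqNgt; apply/negP => /IH; apply.
Qed.

Lemma ex_greatest (P : nat -> Prop) (b : nat) :
  (exists n, P n) -> (forall n, P n -> n <= b) ->
  exists n, P n /\ forall s, P s -> s <= n.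
Proof.
case=> n Pn leb; apply: NNPP => no_greatest.
have unbounded d : exists2 s, P s & d <= s.
  elim: d => [|d [s Ps les]]; first by exists n.
  apply: NNPP => no_above; apply: no_greatest; exists s; split=> // t Pt.
  by rewrite leqNgt; apply/negP => lt_st; apply: no_above; exists t => //; apply: leq_ltn_trans lt_st.
by have [s /leb] := unbounded b.+1; rewrite leqNgt => /negP.
Qed.

Section Extrema.
Variables (T : finType) (e : rel T).

Lemma feasible_le_card s : feasible e s -> s <= #|T|.
Proof. by case=> c [_ <-]; apply: num_colors_le_card. Qed.

Lemma Wminus_exists : K3_worm_colorable e -> exists k, is_Wminus e k.
Proof. by case=> c c_worm; apply: ex_least; exists (num_colors c), c. Qed.

Lemma Wplus_exists : K3_worm_colorable e -> exists k, is_Wplus e k.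
Proof.
by case=> c c_worm; apply: (ex_greatest (b := #|T|)) feasible_le_card; exists (num_colors c), c.
Qed.

End Extrema.

Section Gadget.
Variable K : nat.

Inductive vertex :=
  | U | V | H of 'I_K.+1 | X of 'I_K.+1 & 'I_K | Y of 'I_K.+1 & 'I_K
  | A of 'I_K.+1 | B of 'I_K.+1 | C of 'I_K.+1 | Q of 'I_3 | R of 'I_3.

Definition vertex_code (w : vertex) :
    'I_2 + 'I_K.+1 * (bool * bool) + ('I_K.+1 * 'I_K * bool + 'I_3 * bool) :=
  match w with
  | U => inl (inl ord0) | V => inl (inl ord_max)
  | H i => inl (inr (i, (false, false))) | A i => inl (inr (i, (false, true)))
  | B i => inl (inr (i, (true, false))) | C i => inl (inr (i, (true, true)))
  | X i k => inr (inl (i, k, true)) | Y i k => inr (inl (i, k, false))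
  | Q s => inr (inr (s, true)) | R s => inr (inr (s, false))
  end.

Definition vertex_decode
    (w : 'I_2 + 'I_K.+1 * (bool * bool) + ('I_K.+1 * 'I_K * bool + 'I_3 * bool)) :
    vertex :=
  match w with
  | inl (inl b) => if val b == 0 then U else V
  | inl (inr (i, (false, false))) => H i | inl (inr (i, (false, true))) => A i
  | inl (inr (i, (true, false))) => B i | inl (inr (i, (true, true))) => C i
  | inr (inl (i, k, b)) => if b then X i k else Y i k
  | inr (inr (s, b)) => if b then Q s else R s
  end.

Lemma vertex_codeK : cancel vertex_code vertex_decode. Proof. by case. Qed.

HB.instance Definition _ := Finite.copy vertex (can_type vertex_codeK).

(* The gadget X i k, Y i k separates H i from H (lift i k), the k-th hub
   other than H i: Y i k and H (lift i k) both see the whole triangle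
   A, B, C of index lift i k. *)
Definition arc (x y : vertex) : bool :=
  match x, y with
  | U, V | U, H _ | V, H _ | U, X _ _ | V, X _ _ => true
  | H i, X i' _ | Y i _, H i' => i == i'
  | Y i k, X i' k' => (i == i') && (k == k')
  | Y i k, A j | Y i k, B j | Y i k, C j => j == lift i k
  | H i, A j | H i, B j | H i, C j | A i, B j | B i, C j | A i, C j => i == j
  | A _, Q _ | B _, R _ => true
  | Q s, Q t | R s, R t => s < t
  | _, _ => false
  end.

Definition adj (x y : vertex) : bool := arc x y || arc y x.

Lemma adj_simple : simple_graph adj.
Proof.
split=> [x y|x]; first exact: orbC.
by case: x => // s; rewrite /adj /= orbb ltnn.
Qed.

Local Ltac edge := by rewrite /adj /= ?eqxx ?orbT.

Lemma K3_worm_adj c :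
  (forall x y, adj x y -> forall z, adj y z -> adj x z -> two_colored (c x) (c y) (c z)) ->
  K3_worm adj c.
Proof. by move=> c_worm x y z [xy yz xz]; apply/two_coloredP/c_worm. Qed.

Section WormColoring.
Variables (c : vertex -> nat) (c_worm : K3_worm adj c).

Lemma worm_triangle x y z : adj x y -> adj y z -> adj x z -> two_colored (c x) (c y) (c z).
Proof. by move=> xy yz xz; apply/two_coloredP/c_worm. Qed.

Lemma apex_color_in t1 t2 t3 h :
  adj t1 t2 -> adj t2 t3 -> adj t1 t3 -> adj t1 h -> adj t2 h -> adj t3 h ->
  c h \in [:: c t1; c t2; c t3].
Proof. by move=> *; apply: apex_color_mem; apply: worm_triangle. Qed.

Section SameSwitchColors.
Hypothesis cUV : c U = c V.

Lemma color_hub_neq_U i : c (H i) <> c U.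
Proof.
have: two_colored (c U) (c V) (c (H i)) by apply: worm_triangle; edge.
by rewrite -cUV /two_colored; lia.
Qed.

Lemma color_hub_neq_lift i k : c (H i) <> c (H (lift i k)).
Proof.
have cXU : c (X i k) <> c U.
  have: two_colored (c U) (c V) (c (X i k)) by apply: worm_triangle; edge.
  by rewrite -cUV /two_colored; lia.
have cHX : c (H i) = c (X i k).
  have: two_colored (c U) (c (H i)) (c (X i k)) by apply: worm_triangle; edge.
  by move: (@color_hub_neq_U i) cXU; rewrite /two_colored; lia.
have cYH : c (Y i k) <> c (H i).
  have: two_colored (c (H i)) (c (X i k)) (c (Y i k)) by apply: worm_triangle; edge.
  by rewrite -cHX /two_colored; lia.
set j := lift i k.
suff -> : c (H j) = c (Y i k) by apply/nesym.
by apply: (@apex_color_eq (c (A j)) (c (B j)) (c (C j))); apply: worm_triangle; edge.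
Qed.

Lemma color_hub_inj : injective (fun i => c (H i)).
Proof.
move=> i j /= cHij; case: (unliftP i j) cHij => [k ->|->] //.
by move/color_hub_neq_lift.
Qed.

Lemma num_colors_same_switch : K.+2 <= num_colors c.
Proof.
have colors_uniq : uniq (c U :: [seq c (H i) | i <- enum 'I_K.+1]).
  rewrite /= (map_inj_uniq color_hub_inj) enum_uniq andbT.
  by apply/mapP => -[i _ /esym]; apply: color_hub_neq_U.
apply: leq_trans (num_colors_ge colors_uniq _); first by rewrite /= size_map size_enum_ord.
by move=> _ /predU1P [->|/mapP [i _ ->]]; apply: codom_f.
Qed.

End SameSwitchColors.

Section DistinctSwitchColors.
Hypothesis cUV : c U <> c V.

Let q1 : 'I_3 := Ordinal (isT : 1 < 3).

Let palette : seq nat := [:: c U; c V] ++ codom (c \o Q) ++ codom (c \o R).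

Lemma color_in_palette w : c w \in palette.
Proof.
have switch_in w' : adj U w' -> adj V w' -> c w' \in palette.
  move=> Uw Vw; have: two_colored (c U) (c V) (c w') by apply: worm_triangle.
  by case/(two_colored_pair cUV) => ->; rewrite !inE eqxx ?orbT.
have Q_in s : c (Q s) \in palette by rewrite !mem_cat (codom_f (c \o Q)) orbT.
have R_in s : c (R s) \in palette by rewrite !mem_cat (codom_f (c \o R)) !orbT.
have apex_in t1 t2 t3 h :
    c t1 \in palette -> c t2 \in palette -> c t3 \in palette ->
    adj t1 t2 -> adj t2 t3 -> adj t1 t3 -> adj t1 h -> adj t2 h -> adj t3 h ->
    c h \in palette.
  move=> t1_in t2_in t3_in *.
  have: c h \in [:: c t1; c t2; c t3] by apply: apex_color_in.
  by rewrite !inE => /or3P [] /eqP ->.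
have H_in i : c (H i) \in palette by apply: switch_in; edge.
have A_in j : c (A j) \in palette.
  by apply: (apex_in _ _ _ _ (Q_in ord0) (Q_in q1) (Q_in ord_max)); edge.
have B_in j : c (B j) \in palette.
  by apply: (apex_in _ _ _ _ (R_in ord0) (R_in q1) (R_in ord_max)); edge.
have C_in j : c (C j) \in palette.
  by apply: (apex_in _ _ _ _ (A_in j) (B_in j) (H_in j)); edge.
case: w => [||i|i k|i k|j|j|j|s|s] //.
- by rewrite inE eqxx.
- by rewrite !inE eqxx orbT.
- by apply: switch_in; edge.
- set j := lift i k.
  by apply: (apex_in _ _ _ _ (A_in j) (B_in j) (C_in j)); edge.
Qed.

Lemma num_colors_distinct_switch : num_colors c <= 8.
Proof.
have <- : size palette = 8 by rewrite !size_cat !size_codom card_ord.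
exact: num_colors_le color_in_palette.
Qed.

End DistinctSwitchColors.

Lemma num_colors_dichotomy : num_colors c <= 8 \/ K.+2 <= num_colors c.
Proof.
have [cUV|cUV] := eqVneq (c U) (c V).
  by right; apply: num_colors_same_switch.
by left; apply/num_colors_distinct_switch/eqP.
Qed.

End WormColoring.

Definition coloring3 (w : vertex) : nat :=
  match w with
  | U | H _ | Y _ _ | C _ => 0
  | V | X _ _ => 1
  | A _ | B _ => 2
  | Q s | R s => if val s == 0 then 2 else 0
  end.

Definition hub_coloring (w : vertex) : nat :=
  match w with
  | U | V | A _ | B _ => 0
  | H i | X i _ | C i => i.+1
  | Y i k => (lift i k).+1
  | Q s | R s => if val s == 0 then 0 else 1
  end.

Local Ltac check_triangle :=
  repeat match goal with
  | hyp : is_true (_ && _) |- _ => case/andP: hyp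
  | hyp : is_true (_ || _) |- _ => case/orP: hyp
  | hyp : is_true (_ == _) |- _ => move/eqP: hyp => hyp; subst
  | |- is_true (_ && _) -> _ => case/andP
  | |- is_true (_ || _) -> _ => case/orP
  | |- is_true (_ == _) -> _ => move/eqP=> ?; subst
  | |- _ -> _ => move=> ?
  | hyp : ?i = lift ?i ?k |- _ => by move: (neq_lift i k); rewrite -hyp eqxx
  | hyp : lift ?i ?k = ?i |- _ => by move: (neq_lift i k); rewrite hyp eqxx
  | s : 'I_3 |- _ => destruct s as [[|[|[|?]]] ?]; simpl in *; try discriminate
  end;
  rewrite /two_colored /=;
  try match goal with |- context [bump ?i ?k] => have /eqP := neq_bump i k end; lia.

Local Ltac check_all_triangles :=
  apply: K3_worm_adj;
  case=> [||i|i k|i k|i|i|i|s|s]; case=> [||i'|i' k'|i' k'|i'|i'|i'|s'|s'];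
  rewrite {1}/adj //= => xy;
  case=> [||i''|i'' k''|i'' k''|i''|i''|i''|s''|s'']; rewrite /adj //=; check_triangle.

Lemma coloring3_worm : K3_worm adj coloring3.
Proof. check_all_triangles. Qed.

Lemma hub_coloring_worm : K3_worm adj hub_coloring.
Proof. check_all_triangles. Qed.

Lemma num_colors_coloring3 : num_colors coloring3 <= 3.
Proof. by apply: (num_colors_le (s := [:: 0; 1; 2])) => -[] //= s; case: ifP. Qed.

Lemma num_colors_hub_coloring : K.+2 <= num_colors hub_coloring.
Proof. exact: num_colors_same_switch hub_coloring_worm _. Qed.

End Gadget.

Theorem mainTheorem4 :
  forall m : nat, 0 < m ->
  exists (n : nat) (e : rel 'I_n),
    simple_graph e /\ K3_worm_colorable e /\
    exists (a wmin wmax : nat),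
      [/\ is_Wminus e wmin, is_Wplus e wmax,
          wmin < a, a + m - 1 < wmax &
          forall k, a <= k <= a + m - 1 -> ~ feasible e k].
Proof.
move=> m _; pose e : rel 'I_#|{: vertex (m + 7)}| := relpre enum_val (@adj (m + 7)).
have feasibleE s : feasible e s <-> feasible (@adj (m + 7)) s :=
  feasible_relpre _ _ (enum_val_bij _).
have gap s : feasible e s -> s <= 8 \/ m + 9 <= s.
  by case/feasibleE => c [c_worm <-]; have := num_colors_dichotomy c_worm; lia.
have small : feasible e (num_colors (@coloring3 (m + 7))).
  by apply/feasibleE; exists (@coloring3 _); split=> //; apply: coloring3_worm.
have large : feasible e (num_colors (@hub_coloring (m + 7))).
  by apply/feasibleE; exists (@hub_coloring _); split=> //; apply: hub_coloring_worm.
have e_colorable : K3_worm_colorable e by case: small => c [c_worm _]; exists c.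
have [wmin Wmin] := Wminus_exists e_colorable.
have [wmax Wmax] := Wplus_exists e_colorable.
exists _, e; split; first exact/simple_graph_relpre/adj_simple.
split=> //; exists 9, wmin, wmax; split=> //.
- by apply: leq_ltn_trans (Wmin.2 _ small) _; apply: leq_ltn_trans (num_colors_coloring3 _) _.
- have := Wmax.2 _ large; have := num_colors_hub_coloring (m + 7); lia.
- by move=> k /andP [k_ge k_le] /gap; lia.
Qed.
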